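(* The map $\Psi:\mathcal{FL}_{\mathrm{T}}\to\mathcal{D}^+_{\mathrm{T}}$, $[\mathcal{F}]\mapsto (t^{\mathcal{F}}_\ast,e^{\mathcal{F}}_\ast)$, is a homeomorphism. Moreover $\mathcal{D}^+_{\mathrm{T}}$ is homeomorphic to $\mathbb{R}^5_{>0}$ via $(t_\ast,e_\ast)\mapsto(e_{12},e_{13},e_{23},e_{14},e_{24})$; hence $\mathcal{FL}_{\mathrm{T}}\cong\mathbb{R}^5_{>0}$.
   Context: Flags in $\mathbb{RP}^3$ are pairs $(V,\eta)$, $\eta$ a plane through the point $V$; a tuple is non-degenerate if $\eta_i(V_j)=0\iff i=j$. A tetrahedron of flags is a non-degenerate ordered quadruple $(V_m,\eta_m)_{m=1}^4$ with the $V_m$ not coplanar such that some projective tetrahedron with vertices $V_1,\dots,V_4$ has interior disjoint from all $\eta_m$. $\mathcal{FL}_{\mathrm{T}}$ is the set of tetrahedra of flags modulo the diagonal action of $\mathrm{PGL}(4)$, with the quotient topology. $(\mathrm{E})\mathrm{F}$ is the set of edge-faces $\sigma=(ij)k$, identified with even permutations $[ijkl]$ of $\{1,2,3,4\}$; $\sigma_+=(ki)j$, $\sigma_-=(jk)i$, $\bar\sigma=(ji)l$, $\mathrm{op}\,\sigma=(lk)j$. Triple ratio $t_\sigma=\frac{\bar\eta_i(\bar V_j)\bar\eta_j(\bar V_k)\bar\eta_k(\bar V_i)}{\bar\eta_i(\bar V_k)\bar\eta_j(\bar V_i)\bar\eta_k(\bar V_j)}$, edge ratio $e_\sigma=e_{ij}=\frac{\bar\eta_i(\bar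 V_k)\bar\eta_j(\bar V_l)}{\bar\eta_i(\bar V_l)\bar\eta_j(\bar V_k)}$. $\mathcal{D}^+_{\mathrm{T}}$ is the set of pairs $(t_\ast,e_\ast)$ of functions $(\mathrm{E})\mathrm{F}\to\mathbb{R}_{>0}$ satisfying, for all $\sigma$: $t_\sigma=t_{\sigma_+}=t_{\sigma_-}$, $e_\sigma=e_{\bar\sigma}$, $t_\sigma e_\sigma e_{\sigma_+}e_{\sigma_-}=1$, and $t_\sigma=e_{\mathrm{op}\sigma}e_{\mathrm{op}(\sigma_+)}e_{\mathrm{op}(\sigma_-)}$; it carries the subspace topology of $\mathbb{R}^{24}$. *)

From Stdlib Require Import Reals Lra Lia Bool Arith.
Open Scope R_scope.

Inductive I4 : Type := i1 | i2 | i3 | i4.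
Definition I4_nat (a : I4) : nat :=
  match a with i1 => 1 | i2 => 2 | i3 => 3 | i4 => 4 end%nat.
Definition delta4 (a b : I4) : R := if Nat.eqb (I4_nat a) (I4_nat b) then 1 else 0.

Definition vec4 := I4 -> R.
Definition sum4 (g : I4 -> R) : R := g i1 + g i2 + g i3 + g i4.
(* pairing of a covector (plane) with a vector (point) *)
Definition dot (f v : vec4) : R := sum4 (fun k => f k * v k).
Definition nonzero4 (v : vec4) : Prop := exists k, v k <> 0.

Definition gtb (a b : I4) : nat := if Nat.ltb (I4_nat b) (I4_nat a) then 1%nat else 0%nat.
Definition neqb (a b : I4) : bool := negb (Nat.eqb (I4_nat a) (I4_nat b)).
Definition even_perm4 (q : I4 * I4 * I4 * I4) : bool :=
  let '(a, b, c, d) := q in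
  neqb a b && neqb a c && neqb a d && neqb b c && neqb b d && neqb c d &&
  Nat.even (gtb a b + gtb a c + gtb a d + gtb b c + gtb b d + gtb c d)%nat.

(* sigma = (ij)k is identified with the even permutation [ijkl] *)
Definition EF := { q : I4 * I4 * I4 * I4 | even_perm4 q = true }.

Definition qplus (q : I4 * I4 * I4 * I4) := let '(i, j, k, l) := q in (k, i, j, l).
Definition qminus (q : I4 * I4 * I4 * I4) := let '(i, j, k, l) := q in (j, k, i, l).
Definition qbar (q : I4 * I4 * I4 * I4) := let '(i, j, k, l) := q in (j, i, l, k).
Definition qop (q : I4 * I4 * I4 * I4) := let '(i, j, k, l) := q in (l, k, j, i).

Ltac ev_cases q := destruct q as [[[a b] c] d]; destruct a, b, c, d; simpl;
  intro H; try discriminate; reflexivity.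
Lemma qplus_ok q : even_perm4 q = true -> even_perm4 (qplus q) = true.
Proof. ev_cases q. Qed.
Lemma qminus_ok q : even_perm4 q = true -> even_perm4 (qminus q) = true.
Proof. ev_cases q. Qed.
Lemma qbar_ok q : even_perm4 q = true -> even_perm4 (qbar q) = true.
Proof. ev_cases q. Qed.
Lemma qop_ok q : even_perm4 q = true -> even_perm4 (qop q) = true.
Proof. ev_cases q. Qed.

Definition ef_plus (s : EF) : EF := exist _ (qplus (proj1_sig s)) (qplus_ok _ (proj2_sig s)).
Definition ef_minus (s : EF) : EF := exist _ (qminus (proj1_sig s)) (qminus_ok _ (proj2_sig s)).
Definition ef_bar (s : EF) : EF := exist _ (qbar (proj1_sig s)) (qbar_ok _ (proj2_sig s)).
Definition ef_op (s : EF) : EF := exist _ (qop (proj1_sig s)) (qop_ok _ (proj2_sig s)).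

Definition s12 : EF := exist _ (i1, i2, i3, i4) eq_refl.
Definition s13 : EF := exist _ (i1, i3, i4, i2) eq_refl.
Definition s23 : EF := exist _ (i2, i3, i1, i4) eq_refl.
Definition s14 : EF := exist _ (i1, i4, i2, i3) eq_refl.
Definition s24 : EF := exist _ (i2, i4, i3, i1) eq_refl.

Definition continuous {X Y : Type} (oX : (X -> Prop) -> Prop) (oY : (Y -> Prop) -> Prop)
  (f : X -> Y) : Prop :=
  forall V, oY V -> oX (fun x => V (f x)).

Definition homeomorphism {X Y : Type} (oX : (X -> Prop) -> Prop) (oY : (Y -> Prop) -> Prop)
  (f : X -> Y) : Prop :=
  exists g : Y -> X, (forall x, g (f x) = x) /\ (forall y, f (g y) = y) /\
    continuous oX oY f /\ continuous oY oX g.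

(* topology on X induced by finitely many real coordinates c i (product topology
   of R^C when the coordinates identify X with R^C, C finite) *)
Definition coord_open {X C : Type} (c : C -> X -> R) (U : X -> Prop) : Prop :=
  forall x, U x -> exists eps, 0 < eps /\
    forall y, (forall i, Rabs (c i y - c i x) < eps) -> U y.

Definition sub_open {X : Type} (oX : (X -> Prop) -> Prop) (S : X -> Prop)
  (V : {x | S x} -> Prop) : Prop :=
  exists U, oX U /\ forall z, V z <-> U (proj1_sig z).

Definition quot {L : Type} (rel : L -> L -> Prop) : Type :=
  { C : L -> Prop | exists x, C = rel x }.
Definition cls {L : Type} (rel : L -> L -> Prop) (x : L) : quot rel :=
  exist _ (rel x) (ex_intro _ x eq_refl).
Definition quot_open {L : Type} (oL : (L -> Prop) -> Prop) (rel : L -> L -> Prop)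
  (W : quot rel -> Prop) : Prop :=
  oL (fun x => W (cls rel x)).

(** * Tuples of lifted flags: V m (point) and Eta m (plane), m = 1..4 *)
Definition config := ((I4 -> vec4) * (I4 -> vec4))%type.

Definition config_coord (ix : bool * I4 * I4) (x : config) : R :=
  let '(b, m, k) := ix in if b then fst x m k else snd x m k.
Definition config_open := coord_open config_coord.

Definition is_tetra (x : config) : Prop :=
  let V := fst x in let Eta := snd x in
  (* flags in RP^3: nonzero lifts, V m lies on Eta m *)
  (forall m, nonzero4 (V m) /\ nonzero4 (Eta m) /\ dot (Eta m) (V m) = 0) /\
  (forall i j, dot (Eta i) (V j) = 0 <-> i = j) /\
  (* V_1..V_4 not coplanar: the lifts are linearly independent *)
  (forall c : I4 -> R, (forall k, sum4 (fun j => c j * V j k) = 0) -> forall j, c j = 0) /\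
  (* some projective tetrahedron with vertices V_1..V_4 (given by a choice of signs
     of the lifts) has interior {[sum lam_j sg_j V_j] : lam_j > 0} disjoint from all Eta_m *)
  (exists sg : I4 -> R, (forall j, sg j = 1 \/ sg j = -1) /\
     forall m (lam : I4 -> R), (forall j, 0 < lam j) ->
       dot (Eta m) (fun k => sum4 (fun j => lam j * sg j * V j k)) <> 0).

Definition Ltet := { x : config | is_tetra x }.
Definition Ltet_open := sub_open config_open is_tetra.

(* PGL(4) diagonal action together with rescaling of the lifts *)
Definition mat_inverse (M N : I4 -> I4 -> R) : Prop :=
  (forall i k, sum4 (fun j => M i j * N j k) = delta4 i k) /\
  (forall i k, sum4 (fun j => N i j * M j k) = delta4 i k).
Definition flag_equiv (x y : config) : Prop :=
  exists (M N : I4 -> I4 -> R), mat_inverse M N /\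
  exists (a b : I4 -> R), (forall m, a m <> 0 /\ b m <> 0) /\
  forall m k,
    fst y m k = a m * sum4 (fun j => M k j * fst x m j) /\
    snd y m k = b m * sum4 (fun j => snd x m j * N j k).

Definition relL (p q : Ltet) : Prop := flag_equiv (proj1_sig p) (proj1_sig q).
Definition FLT := quot relL.
Definition FLT_open := quot_open Ltet_open relL.

Definition evl (x : config) (i j : I4) : R := dot (snd x i) (fst x j).

Definition tri_ratio (x : config) (s : EF) : R :=
  let '(i, j, k, l) := proj1_sig s in
  evl x i j * evl x j k * evl x k i / (evl x i k * evl x j i * evl x k j).
Definition edge_ratio (x : config) (s : EF) : R :=
  let '(i, j, k, l) := proj1_sig s in
  evl x i k * evl x j l / (evl x i l * evl x j k).
Definition ratios (x : config) : (EF -> R) * (EF -> R) := (tri_ratio x, edge_ratio x).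

Definition dpair := ((EF -> R) * (EF -> R))%type.
Definition dpair_coord (ix : bool * EF) (p : dpair) : R :=
  let '(b, s) := ix in if b then fst p s else snd p s.
Definition dpair_open := coord_open dpair_coord.

Definition in_DT (p : dpair) : Prop :=
  let t := fst p in let e := snd p in
  (forall s, 0 < t s) /\ (forall s, 0 < e s) /\
  forall s,
    t s = t (ef_plus s) /\ t s = t (ef_minus s) /\
    e s = e (ef_bar s) /\
    t s * e s * e (ef_plus s) * e (ef_minus s) = 1 /\
    t s = e (ef_op s) * e (ef_op (ef_plus s)) * e (ef_op (ef_minus s)).

Definition DT := { p : dpair | in_DT p }.
Definition DT_open := sub_open dpair_open in_DT.

Inductive I5 : Type := c1 | c2 | c3 | c4 | c5.
Definition R5 := I5 -> R.
Definition R5_open := coord_open (fun (i : I5) (y : R5) => y i).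
Definition pos5 (y : R5) : Prop := forall i, 0 < y i.
Definition P5 := { y : R5 | pos5 y }.
Definition P5_open := sub_open R5_open pos5.

Definition edge5 (p : dpair) : R5 := fun i =>
  match i with
  | c1 => snd p s12 | c2 => snd p s13 | c3 => snd p s23 | c4 => snd p s14 | c5 => snd p s24
  end.

(* Rescaling the lifts multiplies the pairing matrix a_ij = eta_i(V_j) by b_i c_j,
   which leaves every triple and edge ratio unchanged; so Psi is well defined on the
   quotient. Choosing the signs of the tetrahedron, each row of (sign-corrected) a has
   constant sign off the diagonal (a linear form nonvanishing on an open orthant has
   no coefficients of opposite signs), hence all ratios are positive. Conversely, since
   the V_j are independent, a projective transformation and rescalings move any
   tetrahedron of flags to the standard basis with a normalized pairing matrix whose
   entries are monomials in e12, e13, e23, e14, e24, and the relations of D_T show that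
   these five numbers determine the whole pair (t, e). All maps involved are rational
   with nonvanishing denominators, hence continuous. *)

From Stdlib Require Import Reals Lra List Eqdep_dec FunctionalExtensionality
  ProofIrrelevance PropExtensionality ClassicalEpsilon.
From mathcomp Require all_boot all_algebra Rstruct.
Import ListNotations.
Open Scope R_scope.

Lemma I4_eq_dec (a b : I4) : {a = b} + {a <> b}.
Proof. decide equality. Defined.

Lemma EF_ext (s s' : EF) : proj1_sig s = proj1_sig s' -> s = s'.
Proof. apply eq_sig_hprop; intros q; apply UIP_dec, Bool.bool_dec. Qed.

Ltac EF_cases s :=
  let q := fresh "q" in let H := fresh "H" in
  destruct s as [q H]; destruct q as [[[[] []] []] []]; try discriminate H;
  rewrite (UIP_dec Bool.bool_dec H eq_refl); clear H.

Lemma sum4_ext f g : (forall q, f q = g q) -> sum4 f = sum4 g.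
Proof. intros H; unfold sum4; rewrite !H; reflexivity. Qed.

Lemma sum4_delta_l k (x : I4 -> R) : sum4 (fun l => delta4 k l * x l) = x k.
Proof. destruct k; unfold sum4, delta4; simpl; ring. Qed.

Lemma sum4_delta_r k (x : I4 -> R) : sum4 (fun l => x l * delta4 l k) = x k.
Proof. destruct k; unfold sum4, delta4; simpl; ring. Qed.

Lemma delta4_sym i k : delta4 i k = delta4 k i.
Proof. destruct i, k; reflexivity. Qed.

Lemma delta4_neq i k : i <> k -> delta4 i k = 0.
Proof. intro H; destruct i, k; try congruence; reflexivity. Qed.

Lemma delta4_diag i : delta4 i i = 1.
Proof. destruct i; reflexivity. Qed.

(** * Projective equivalence of tuples of flags *)

Lemma inverse_mat_vec (N M : I4 -> I4 -> R) (v : I4 -> R) k :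
  (forall i l, sum4 (fun j => N i j * M j l) = delta4 i l) ->
  sum4 (fun j => N k j * sum4 (fun l => M j l * v l)) = v k.
Proof.
  intro HNM.
  transitivity (sum4 (fun l => sum4 (fun j => N k j * M j l) * v l));
    [unfold sum4; ring|].
  rewrite (sum4_ext _ (fun l => delta4 k l * v l)) by (intro; rewrite HNM; reflexivity).
  apply sum4_delta_l.
Qed.

Lemma inverse_vec_mat (N M : I4 -> I4 -> R) (v : I4 -> R) k :
  (forall i l, sum4 (fun j => N i j * M j l) = delta4 i l) ->
  sum4 (fun j => sum4 (fun l => v l * N l j) * M j k) = v k.
Proof.
  intro HNM.
  transitivity (sum4 (fun l => v l * sum4 (fun j => N l j * M j k)));
    [unfold sum4; ring|].
  rewrite (sum4_ext _ (fun l => v l * delta4 l k)) by (intro; rewrite HNM; reflexivity).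
  apply sum4_delta_r.
Qed.

Lemma flag_equiv_refl x : flag_equiv x x.
Proof.
  exists delta4, delta4; split.
  - split; intros i k; apply (sum4_delta_l i (fun j => delta4 j k)).
  - exists (fun _ => 1), (fun _ => 1); split; [intros; lra|].
    intros m k; rewrite sum4_delta_l, sum4_delta_r; split; ring.
Qed.

Lemma flag_equiv_sym x y : flag_equiv x y -> flag_equiv y x.
Proof.
  intros (M & N & [HMN HNM] & a & b & Hab & H).
  exists N, M; split; [split; assumption|].
  exists (fun m => / a m), (fun m => / b m); split.
  - intro m; destruct (Hab m); split; apply Rinv_neq_0_compat; assumption.
  - intros m k; destruct (Hab m) as [Ha Hb]; split.
    + rewrite (sum4_ext _ (fun j => a m * (N k j * sum4 (fun l => M j l * fst x m l))))
        by (intro j; rewrite (proj1 (H m j)); ring).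
      rewrite <- (inverse_mat_vec N M (fst x m) k HNM) at 1.
      unfold sum4; field; assumption.
    + rewrite (sum4_ext _ (fun j => b m * (sum4 (fun l => snd x m l * N l j) * M j k)))
        by (intro j; rewrite (proj2 (H m j)); ring).
      rewrite <- (inverse_vec_mat N M (snd x m) k HNM) at 1.
      unfold sum4; field; assumption.
Qed.

Lemma flag_equiv_trans x y z : flag_equiv x y -> flag_equiv y z -> flag_equiv x z.
Proof.
  intros (M & N & [HMN HNM] & a & b & Hab & H) (M' & N' & [HMN' HNM'] & a' & b' & Hab' & H').
  exists (fun k l => sum4 (fun j => M' k j * M j l)),
    (fun l k => sum4 (fun j => N l j * N' j k)).
  split; [split|].
  - intros i k.
    transitivity (sum4 (fun p => M' i p * sum4 (fun j => M p j * sum4 (fun q => N j q * N' q k))));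
      [unfold sum4; ring|].
    rewrite (sum4_ext _ (fun p => M' i p * N' p k))
      by (intro p; rewrite (inverse_mat_vec M N (fun q => N' q k) p HMN); reflexivity).
    apply HMN'.
  - intros i k.
    transitivity (sum4 (fun p => N i p * sum4 (fun j => N' p j * sum4 (fun q => M' j q * M q k))));
      [unfold sum4; ring|].
    rewrite (sum4_ext _ (fun p => N i p * M p k))
      by (intro p; rewrite (inverse_mat_vec N' M' (fun q => M q k) p HNM'); reflexivity).
    apply HNM.
  - exists (fun m => a' m * a m), (fun m => b' m * b m); split.
    + intro m; destruct (Hab m), (Hab' m);
        split; apply Rmult_integral_contrapositive_currified; assumption.
    + intros m k; rewrite (proj1 (H' m k)), (proj2 (H' m k)); split.
      * rewrite (sum4_ext _ (fun j => M' k j * (a m * sum4 (fun l => M j l * fst x m l))))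
          by (intro j; rewrite (proj1 (H m j)); reflexivity).
        unfold sum4; ring.
      * rewrite (sum4_ext _ (fun j => (b m * sum4 (fun l => snd x m l * N l j)) * N' j k))
          by (intro j; rewrite (proj2 (H m j)); reflexivity).
        unfold sum4; ring.
Qed.

Lemma evl_flag_equiv x y : flag_equiv x y ->
  exists a b : I4 -> R, (forall m, a m <> 0 /\ b m <> 0) /\
    forall i j, evl y i j = b i * a j * evl x i j.
Proof.
  intros (M & N & [HMN HNM] & a & b & Hab & H).
  exists a, b; split; [assumption|].
  intros i j; unfold evl, dot.
  rewrite (sum4_ext _ (fun k => (b i * sum4 (fun l => snd x i l * N l k)) *
                                (a j * sum4 (fun p => M k p * fst x j p))))
    by (intro k; rewrite (proj2 (H i k)), (proj1 (H j k)); reflexivity).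
  transitivity (b i * a j *
    sum4 (fun l => snd x i l * sum4 (fun k => N l k * sum4 (fun p => M k p * fst x j p))));
    [unfold sum4; ring|].
  f_equal; apply sum4_ext; intro l.
  rewrite (inverse_mat_vec N M (fst x j) l HNM); reflexivity.
Qed.

(** * Triple and edge ratios of a pairing matrix *)

Definition pair_tri (a : I4 -> I4 -> R) (s : EF) : R :=
  let '(i, j, k, l) := proj1_sig s in a i j * a j k * a k i / (a i k * a j i * a k j).
Definition pair_edge (a : I4 -> I4 -> R) (s : EF) : R :=
  let '(i, j, k, l) := proj1_sig s in a i k * a j l / (a i l * a j k).
Definition pair_ratios (a : I4 -> I4 -> R) : dpair := (pair_tri a, pair_edge a).

Lemma ratios_pair_ratios x : ratios x = pair_ratios (evl x).
Proof. reflexivity. Qed.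

Definition offdiag_neq0 (a : I4 -> I4 -> R) : Prop := forall i j, i <> j -> a i j <> 0.

Lemma pair_ratios_rescale (a : I4 -> I4 -> R) (b c : I4 -> R) :
  offdiag_neq0 a -> (forall m, b m <> 0 /\ c m <> 0) ->
  pair_ratios (fun i j => b i * c j * a i j) = pair_ratios a.
Proof.
  intros Ha Hbc.
  assert (Hb : forall m, b m <> 0) by apply Hbc.
  assert (Hc : forall m, c m <> 0) by apply Hbc.
  unfold pair_ratios; f_equal; apply functional_extensionality; intro s; EF_cases s;
    unfold pair_tri, pair_edge; simpl; field;
    repeat split; first [apply Hb | apply Hc | apply Ha; discriminate].
Qed.

Lemma tetra_offdiag_neq0 x : is_tetra x -> offdiag_neq0 (evl x).
Proof. intros (_ & Hnd & _) i j Hij E. apply Hij, Hnd, E. Qed.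

Lemma tetra_evl_diag x : is_tetra x -> forall i, evl x i i = 0.
Proof. intros (Hf & _) i. apply (Hf i). Qed.

Lemma ratios_flag_equiv x y : is_tetra x -> flag_equiv x y -> ratios x = ratios y.
Proof.
  intros Hx Hxy. destruct (evl_flag_equiv x y Hxy) as (a & b & Hab & He).
  rewrite !ratios_pair_ratios.
  replace (evl y) with (fun i j => b i * a j * evl x i j)
    by (do 2 (apply functional_extensionality; intro); symmetry; apply He).
  symmetry; apply pair_ratios_rescale; [apply tetra_offdiag_neq0, Hx|].
  intro m; split; apply Hab.
Qed.

Lemma pair_ratios_pos (a : I4 -> I4 -> R) : (forall i j, i <> j -> 0 < a i j) ->
  (forall s, 0 < pair_tri a s) /\ (forall s, 0 < pair_edge a s).
Proof.
  intro Ha; split; intro s; EF_cases s; unfold pair_tri, pair_edge; simpl;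
    repeat first [apply Rdiv_lt_0_compat | apply Rmult_lt_0_compat]; apply Ha; discriminate.
Qed.

Lemma pair_ratios_relations (a : I4 -> I4 -> R) : offdiag_neq0 a ->
  let t := pair_tri a in let e := pair_edge a in
  forall s,
    t s = t (ef_plus s) /\ t s = t (ef_minus s) /\
    e s = e (ef_bar s) /\
    t s * e s * e (ef_plus s) * e (ef_minus s) = 1 /\
    t s = e (ef_op s) * e (ef_op (ef_plus s)) * e (ef_op (ef_minus s)).
Proof.
  intros Ha t e s; EF_cases s; unfold t, e, pair_tri, pair_edge; simpl;
    repeat split; field; repeat split; apply Ha; discriminate.
Qed.

Lemma opposite_signs_cancel a b r : 0 < a -> b < 0 ->
  exists u v, 0 < u /\ 0 < v /\ r + u * a + v * b = 0.
Proof.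
  intros Ha Hb.
  assert (Hr : 0 <= Rabs r + r) by (pose proof (Rle_abs (- r)); rewrite Rabs_Ropp in *; lra).
  exists ((Rabs r + 1) / a), ((Rabs r + 1 + r) / - b); split; [|split].
  - apply Rdiv_lt_0_compat; [pose proof (Rabs_pos r)|]; lra.
  - apply Rdiv_lt_0_compat; lra.
  - field; lra.
Qed.

Definition reweight (j k : I4) (u v : R) (q : I4) : R :=
  if I4_eq_dec q j then u else if I4_eq_dec q k then v else 1.

Lemma sum4_reweight j k u v (c : I4 -> R) : j <> k ->
  sum4 (fun q => reweight j k u v q * c q) = (sum4 c - c j - c k) + u * c j + v * c k.
Proof. intros Hjk; destruct j, k; try congruence; unfold sum4, reweight; simpl; ring. Qed.

Lemma orthant_form_same_sign (c : I4 -> R) :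
  (forall lam, (forall q, 0 < lam q) -> sum4 (fun q => lam q * c q) <> 0) ->
  forall j k, 0 <= c j * c k.
Proof.
  intros Hc.
  assert (Hopp : forall j k, j <> k -> 0 < c j -> c k < 0 -> False).
  { intros j k Hjk Hj Hk.
    destruct (opposite_signs_cancel _ _ (sum4 c - c j - c k) Hj Hk) as (u & v & Hu & Hv & E).
    apply (Hc (reweight j k u v)).
    - intro q; unfold reweight; destruct (I4_eq_dec q j); [|destruct (I4_eq_dec q k)]; lra.
    - rewrite sum4_reweight by assumption; exact E. }
  intros j k; destruct (I4_eq_dec j k) as [<-|Hjk]; [nra|].
  apply Rnot_lt_le; intro Hneg.
  destruct (Rlt_or_le 0 (c j)) as [Hj|Hj].
  - apply (Hopp j k); [assumption..|nra].
  - assert (Hk : 0 < c k) by nra.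
    apply (Hopp k j); [congruence|assumption|nra].
Qed.

Lemma tetra_row_same_sign x : is_tetra x ->
  exists sg : I4 -> R, (forall j, sg j = 1 \/ sg j = -1) /\
    forall m j k, j <> m -> k <> m -> 0 < (sg j * evl x m j) * (sg k * evl x m k).
Proof.
  intros Hx. pose proof (tetra_offdiag_neq0 x Hx) as Hoff.
  destruct Hx as (_ & _ & _ & sg & Hsg & Hint).
  exists sg; split; [assumption|]. intros m j k Hj Hk.
  set (c := fun q => sg q * evl x m q).
  assert (Hc : forall q, q <> m -> c q <> 0).
  { intros q Hq; apply Rmult_integral_contrapositive_currified; [|apply Hoff; congruence].
    destruct (Hsg q) as [-> | ->]; lra. }
  assert (Hform : forall lam, (forall q, 0 < lam q) -> sum4 (fun q => lam q * c q) <> 0).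
  { intros lam Hlam. specialize (Hint m lam Hlam).
    replace (sum4 (fun q => lam q * c q))
      with (dot (snd x m) (fun k => sum4 (fun j => lam j * sg j * fst x j k)))
      by (unfold c, evl, dot, sum4; ring).
    exact Hint. }
  change (0 < c j * c k).
  destruct (Rle_lt_or_eq_dec _ _ (orthant_form_same_sign c Hform j k)) as [|E]; [assumption|].
  exfalso; symmetry in E; apply Rmult_integral in E; destruct E as [E|E];
    [apply (Hc j Hj E)|apply (Hc k Hk E)].
Qed.

Lemma Rdiv_pos_of_mul_pos x y : 0 < x * y -> 0 < x / y.
Proof.
  intro H. assert (Hy : y <> 0) by (intros ->; lra).
  replace (x / y) with (x * y / (y * y)) by (field; exact Hy).
  apply Rdiv_lt_0_compat; [exact H|exact (Rsqr_pos_lt y Hy)].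
Qed.

Definition other (m : I4) : I4 := match m with i1 => i2 | _ => i1 end.

Lemma other_neq m : other m <> m.
Proof. destruct m; discriminate. Qed.

(* Row m is divided by its sign-corrected entry in column [other m]; by
   [tetra_row_same_sign] all off-diagonal entries become positive. *)
Lemma tetra_rescale_pos x : is_tetra x ->
  exists b c : I4 -> R, (forall m, b m <> 0 /\ c m <> 0) /\
    forall i j, i <> j -> 0 < b i * c j * evl x i j.
Proof.
  intros Hx. destruct (tetra_row_same_sign x Hx) as (sg & Hsg & Hrow).
  assert (Hsg0 : forall j, sg j <> 0) by (intro j; destruct (Hsg j) as [-> | ->]; lra).
  exists (fun m => / (sg (other m) * evl x m (other m))), sg; split.
  - intro m; split; [|apply Hsg0].
    apply Rinv_neq_0_compat, Rmult_integral_contrapositive_currified; [apply Hsg0|].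
    apply tetra_offdiag_neq0; [exact Hx|]. intro E; apply (other_neq m); congruence.
  - intros i j Hij.
    replace (/ (sg (other i) * evl x i (other i)) * sg j * evl x i j)
      with (sg j * evl x i j / (sg (other i) * evl x i (other i))) by (unfold Rdiv; ring).
    apply Rdiv_pos_of_mul_pos, Hrow; [congruence|apply other_neq].
Qed.

Lemma pair_ratios_in_DT (a : I4 -> I4 -> R) :
  (forall i j, i <> j -> 0 < a i j) -> in_DT (pair_ratios a).
Proof.
  intro Ha. destruct (pair_ratios_pos a Ha) as [Ht He].
  split; [exact Ht|split; [exact He|]].
  apply pair_ratios_relations. intros i j Hij; apply Rgt_not_eq, Ha, Hij.
Qed.

Lemma ratios_in_DT x : is_tetra x -> in_DT (ratios x).
Proof.
  intros Hx. destruct (tetra_rescale_pos x Hx) as (b & c & Hbc & Hpos).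
  rewrite ratios_pair_ratios, <- (pair_ratios_rescale (evl x) b c);
    [|apply tetra_offdiag_neq0, Hx|exact Hbc].
  apply pair_ratios_in_DT, Hpos.
Qed.

(** * The standard tetrahedron and the space D_T *)

(* Points at the standard basis; the planes normalized so that a_1j = a_i1 = a_23 = 1. *)
Definition std_eta (y : R5) (m k : I4) : R :=
  match m, k with
  | i1, i1 => 0 | i1, _ => 1
  | i2, i1 => 1 | i2, i2 => 0 | i2, i3 => 1 | i2, i4 => y c1
  | i3, i1 => 1 | i3, i2 => y c1 * y c2 * y c3 | i3, i3 => 0 | i3, i4 => y c1 * y c3
  | i4, i1 => 1 | i4, i2 => / (y c4 * y c5) | i4, i3 => / y c5 | i4, i4 => 0
  end.
Definition std_config (y : R5) : config := (delta4, std_eta y).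

Lemma evl_std_config y i j : evl (std_config y) i j = std_eta y i j.
Proof. unfold evl, dot, sum4; simpl; destruct j; unfold delta4; simpl; ring. Qed.

Lemma std_eta_diag y m : std_eta y m m = 0.
Proof. destruct m; reflexivity. Qed.

Lemma std_eta_pos y : pos5 y -> forall i j, i <> j -> 0 < std_eta y i j.
Proof.
  intros Hy i j Hij.
  pose proof (Hy c1); pose proof (Hy c2); pose proof (Hy c3);
    pose proof (Hy c4); pose proof (Hy c5).
  destruct i, j; simpl; try congruence; try lra;
    repeat (apply Rmult_lt_0_compat || apply Rinv_0_lt_compat); assumption.
Qed.

Lemma sum4_pos_off (m : I4) (f : I4 -> R) :
  f m = 0 -> (forall j, j <> m -> 0 < f j) -> 0 < sum4 f.
Proof.
  intros Hm Hf. pose proof (Hf i1); pose proof (Hf i2); pose proof (Hf i3); pose proof (Hf i4).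
  destruct m; unfold sum4; rewrite Hm;
    repeat match goal with H : ?j <> ?k -> _ |- _ => specialize (H ltac:(discriminate)) end; lra.
Qed.

Lemma std_config_tetra y : pos5 y -> is_tetra (std_config y).
Proof.
  intros Hy. pose proof (std_eta_pos y Hy) as Hpos.
  split; [|split; [|split]].
  - intro m; split; [|split].
    + exists m; rewrite delta4_diag; lra.
    + exists (other m). apply Rgt_not_eq, Hpos. intro E; apply (other_neq m); congruence.
    + change (evl (std_config y) m m = 0); rewrite evl_std_config; apply std_eta_diag.
  - intros i j; change (evl (std_config y) i j = 0 <-> i = j); rewrite evl_std_config; split.
    + intro E; destruct (I4_eq_dec i j) as [|Hij]; [assumption|].
      pose proof (Hpos i j Hij); lra.
    + intros ->; apply std_eta_diag.
  - intros c Hc j. specialize (Hc j). simpl in Hc. rewrite sum4_delta_r in Hc. exact Hc.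
  - exists (fun _ => 1); split; [intro; left; reflexivity|].
    intros m lam Hlam.
    replace (dot (snd (std_config y) m)
               (fun k => sum4 (fun j => lam j * 1 * fst (std_config y) j k)))
      with (sum4 (fun j => lam j * std_eta y m j))
      by (unfold dot, sum4; simpl; unfold delta4; simpl; ring).
    assert (Hterm : forall j, j <> m -> 0 < lam j * std_eta y m j)
      by (intros j Hj; apply Rmult_lt_0_compat; [apply Hlam|apply Hpos; congruence]).
    apply Rgt_not_eq, (sum4_pos_off m); [|exact Hterm].
    rewrite std_eta_diag; ring.
Qed.

Lemma edge5_std_config y : pos5 y -> edge5 (ratios (std_config y)) = y.
Proof.
  intros Hy. pose proof (Hy c1); pose proof (Hy c2); pose proof (Hy c3);
    pose proof (Hy c4); pose proof (Hy c5).
  apply functional_extensionality; intro i; destruct i; simpl;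
    unfold edge_ratio; simpl; rewrite !evl_std_config; simpl; field; lra.
Qed.

(* e_sigma only depends on the edge of sigma; e_34 is forced by the face relations at (12)3. *)
Definition edge_param (y : R5) (s : EF) : R :=
  match proj1_sig s with
  | (i1, i2, _, _) | (i2, i1, _, _) => y c1
  | (i1, i3, _, _) | (i3, i1, _, _) => y c2
  | (i2, i3, _, _) | (i3, i2, _, _) => y c3
  | (i1, i4, _, _) | (i4, i1, _, _) => y c4
  | (i2, i4, _, _) | (i4, i2, _, _) => y c5
  | _ => / (y c1 * y c2 * y c3 * y c4 * y c5)
  end.

Section DT.
Variable p : dpair.
Hypothesis Hp : in_DT p.

Lemma DT_edge_bar s s' : proj1_sig s' = qbar (proj1_sig s) -> snd p s' = snd p s.
Proof.
  intro E. destruct (proj2 (proj2 Hp) s) as (_ & _ & Hbar & _).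
  rewrite Hbar; f_equal; apply EF_ext, E.
Qed.

Lemma DT_tri s : fst p s = / (snd p s * snd p (ef_plus s) * snd p (ef_minus s)).
Proof.
  destruct Hp as (_ & He & Hrel). destruct (Hrel s) as (_ & _ & _ & H & _).
  pose proof (He s); pose proof (He (ef_plus s)); pose proof (He (ef_minus s)).
  rewrite <- (Rmult_1_l (/ _)), <- H. field; repeat split; lra.
Qed.

Lemma DT_face_product s :
  snd p s * snd p (ef_plus s) * snd p (ef_minus s) *
    (snd p (ef_op s) * snd p (ef_op (ef_plus s)) * snd p (ef_op (ef_minus s))) = 1.
Proof.
  destruct Hp as (_ & _ & Hrel). destruct (Hrel s) as (_ & _ & _ & H & Hop).
  rewrite <- Hop, <- H; ring.
Qed.

Lemma DT_edge34 :
  snd p (exist _ (i4, i3, i2, i1) eq_refl) =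
  / (edge5 p c1 * edge5 p c2 * edge5 p c3 * edge5 p c4 * edge5 p c5).
Proof.
  pose proof (DT_face_product s12) as H.
  rewrite (DT_edge_bar s13 (ef_plus s12) eq_refl), (DT_edge_bar s24 (ef_op (ef_plus s12)) eq_refl),
    (DT_edge_bar s14 (ef_op (ef_minus s12)) eq_refl), (EF_ext (ef_minus s12) s23 eq_refl),
    (EF_ext (ef_op s12) (exist _ (i4, i3, i2, i1) eq_refl) eq_refl) in H.
  destruct Hp as (_ & He & _).
  pose proof (He s12); pose proof (He s13); pose proof (He s23);
    pose proof (He s14); pose proof (He s24).
  simpl; set (e34 := snd p (exist _ (i4, i3, i2, i1) _)) in *.
  rewrite <- (Rmult_1_l (/ _)), <- H. field; repeat split; lra.
Qed.

Lemma DT_edge_param : snd p = edge_param (edge5 p).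
Proof.
  apply functional_extensionality; intro s.
  pose proof DT_edge34 as E34.
  simpl in E34; EF_cases s; unfold edge_param; simpl;
    first [ reflexivity | exact E34
          | rewrite <- E34; apply (DT_edge_bar (exist _ (i4, i3, i2, i1) eq_refl)); reflexivity
          | apply (DT_edge_bar s12); reflexivity | apply (DT_edge_bar s13); reflexivity
          | apply (DT_edge_bar s23); reflexivity | apply (DT_edge_bar s14); reflexivity
          | apply (DT_edge_bar s24); reflexivity ].
Qed.

End DT.

Lemma DT_eq_of_edge5 p q : in_DT p -> in_DT q -> edge5 p = edge5 q -> p = q.
Proof.
  intros Hp Hq E.
  assert (Hsnd : snd p = snd q)
    by (rewrite (DT_edge_param p Hp), (DT_edge_param q Hq), E; reflexivity).
  destruct p as [tp ep], q as [tq eq]; simpl in Hsnd; subst eq; f_equal.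
  apply functional_extensionality; intro s.
  exact (eq_trans (DT_tri _ Hp s) (eq_sym (DT_tri _ Hq s))).
Qed.

Lemma DT_edge5_pos p : in_DT p -> pos5 (edge5 p).
Proof. intros (_ & He & _) i; destruct i; apply He. Qed.

Lemma std_config_ratios p : in_DT p -> ratios (std_config (edge5 p)) = p.
Proof.
  intro Hp. pose proof (DT_edge5_pos p Hp) as Hpos.
  apply DT_eq_of_edge5; [apply ratios_in_DT, std_config_tetra, Hpos|exact Hp|].
  apply edge5_std_config, Hpos.
Qed.

(** * Normal form of a tetrahedron of flags *)

Definition lin_independent (V : I4 -> vec4) : Prop :=
  forall c : I4 -> R, (forall k, sum4 (fun j => c j * V j k) = 0) -> forall j, c j = 0.

Lemma tetra_lin_independent x : is_tetra x -> lin_independent (fst x).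
Proof. intros (_ & _ & Hind & _); exact Hind. Qed.

Module MatrixInverse.
Import all_boot all_algebra Rstruct GRing.Theory.
Local Open Scope ring_scope.

Definition of_ord (i : 'I_4) : I4 :=
  match val i with 0 => i1 | 1 => i2 | 2 => i3 | _ => i4 end%nat.
Definition to_ord (a : I4) : 'I_4 :=
  match a with
  | i1 => @Ordinal 4 0 isT | i2 => @Ordinal 4 1 isT
  | i3 => @Ordinal 4 2 isT | i4 => @Ordinal 4 3 isT
  end.

Lemma to_ordK a : of_ord (to_ord a) = a. Proof. by case: a. Qed.
Lemma of_ordK i : to_ord (of_ord i) = i.
Proof. by apply: val_inj; case: i => [[|[|[|[|n]]]] Hn]. Qed.

Lemma sum4E (f : I4 -> R) : sum4 f = \sum_(i < 4) f (of_ord i).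
Proof. by rewrite !big_ord_recl big_ord0 /sum4 /= addr0 !addrA. Qed.

Lemma delta4E a b : delta4 a b = (to_ord a == to_ord b)%:R.
Proof. by case: a; case: b. Qed.

Lemma independent_inverse (V : I4 -> vec4) :
  lin_independent V -> exists Q, mat_inverse Q (fun j m => V m j).
Proof.
move=> Hind; pose A : 'M[R]_4 := \matrix_(i, j) V (of_ord i) (of_ord j).
have HA : A \in unitmx.
  rewrite -row_free_unit -kermx_eq0; apply/eqP/matrixP => i j.
  have /matrixP H := mulmx_ker A.
  rewrite [RHS]mxE -(of_ordK j).
  apply: (Hind (fun a => kermx A i (to_ord a))) => k; rewrite sum4E.
  transitivity ((kermx A *m A) i (to_ord k)); last by rewrite H mxE.
  by rewrite mxE; apply: eq_bigr => l _; rewrite [X in _ = _ * X]mxE of_ordK to_ordK.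
exists (fun k j => invmx A (to_ord j) (to_ord k)); split => i k; rewrite sum4E delta4E.
- have /matrixP/(_ (to_ord k) (to_ord i)) := mulmxV HA; rewrite !mxE eq_sym => <-.
  by apply: eq_bigr => l _; rewrite mxE of_ordK to_ordK mulrC.
- have /matrixP/(_ (to_ord k) (to_ord i)) := mulVmx HA; rewrite !mxE eq_sym => <-.
  by apply: eq_bigr => l _; rewrite mxE of_ordK to_ordK mulrC.
Qed.
End MatrixInverse.

Lemma delta4_rescale (a : I4 -> R) i k : a i <> 0 -> a k / a i * delta4 i k = delta4 k i.
Proof.
  intro Hi; rewrite delta4_sym; destruct (I4_eq_dec i k) as [<-|Hik].
  - rewrite delta4_diag; field; exact Hi.
  - rewrite delta4_neq by congruence; ring.
Qed.

Lemma flag_equiv_std_basis x (a b : I4 -> R) :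
  lin_independent (fst x) -> (forall m, a m <> 0 /\ b m <> 0) ->
  flag_equiv x (delta4, fun m k => b m * a k * evl x m k).
Proof.
  intros Hind Hab.
  assert (Ha : forall m, a m <> 0) by apply Hab.
  destruct (MatrixInverse.independent_inverse _ Hind) as (Q & HQV & HVQ).
  exists (fun k j => Q k j / a k), (fun j k => fst x k j * a k); split; [split|].
  - intros i k.
    transitivity (a k / a i * sum4 (fun j => Q i j * fst x k j)); [unfold sum4; field; apply Ha|].
    rewrite HQV, delta4_rescale by apply Ha; apply delta4_sym.
  - intros i k.
    rewrite <- (HVQ i k); apply sum4_ext; intro j; field; apply Ha.
  - exists a, b; split; [exact Hab|]. intros m k; split.
    + transitivity (a m / a k * sum4 (fun j => Q k j * fst x m j)); [|unfold sum4; field; apply Ha].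
      rewrite HQV, delta4_rescale by apply Ha; reflexivity.
    + unfold evl, dot, sum4; simpl; ring.
Qed.

Definition pt_scale (a : I4 -> I4 -> R) (k : I4) : R :=
  match k with
  | i1 => a i2 i3 / (a i2 i1 * a i1 i3) | i2 => / a i1 i2 | i3 => / a i1 i3 | i4 => / a i1 i4
  end.
Definition pl_scale (a : I4 -> I4 -> R) (m : I4) : R :=
  match m with i1 => 1 | _ => / (a m i1 * pt_scale a i1) end.

Lemma pt_pl_scale_neq0 a : offdiag_neq0 a -> forall m, pt_scale a m <> 0 /\ pl_scale a m <> 0.
Proof.
  intros Ha.
  assert (Hpt : forall k, pt_scale a k <> 0).
  { intro k; destruct k; simpl; unfold Rdiv;
      repeat (apply Rmult_integral_contrapositive_currified || apply Rinv_neq_0_compat);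
      apply Ha; discriminate. }
  intro m; split; [apply Hpt|]; destruct m; unfold pl_scale; [lra|..];
    apply Rinv_neq_0_compat, Rmult_integral_contrapositive_currified;
    first [apply Hpt | apply Ha; discriminate].
Qed.

Lemma std_eta_edge5 (a : I4 -> I4 -> R) : offdiag_neq0 a -> (forall i, a i i = 0) ->
  forall m k, std_eta (edge5 (pair_ratios a)) m k = pl_scale a m * pt_scale a k * a m k.
Proof.
  intros Ha Hdiag m k.
  destruct (I4_eq_dec m k) as [<-|Hmk]; [rewrite std_eta_diag, Hdiag; ring|].
  destruct m, k; try congruence; simpl; unfold pair_edge; simpl;
    field; repeat split; apply Ha; discriminate.
Qed.

Lemma tetra_flag_equiv_std x : is_tetra x -> flag_equiv x (std_config (edge5 (ratios x))).
Proof.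
  intros Hx. pose proof (tetra_offdiag_neq0 x Hx) as Hoff.
  replace (std_config (edge5 (ratios x)))
    with (delta4, fun m k => pl_scale (evl x) m * pt_scale (evl x) k * evl x m k).
  - apply flag_equiv_std_basis; [apply tetra_lin_independent, Hx|].
    intro m; destruct (pt_pl_scale_neq0 _ Hoff m); split; assumption.
  - unfold std_config; f_equal.
    do 2 (apply functional_extensionality; intro).
    rewrite ratios_pair_ratios, std_eta_edge5; [reflexivity|exact Hoff|apply tetra_evl_diag, Hx].
Qed.

(** * Coordinate topologies *)

Definition finite (D : Type) : Prop := exists l : list D, forall d, In d l.

Lemma finite_prod (A B : Type) : finite A -> finite B -> finite (A * B).
Proof.
  intros [la Ha] [lb Hb]; exists (list_prod la lb); intros [a b]; apply in_prod; auto.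
Qed.

Section Near.
Context {X C : Type} (c : C -> X -> R).

(* [coord_open c U] says exactly that [U] is [near] each of its points. *)
Definition near (x : X) (P : X -> Prop) : Prop :=
  exists del, 0 < del /\ forall y, (forall i, Rabs (c i y - c i x) < del) -> P y.

Lemma near_mono x (P Q : X -> Prop) : (forall y, P y -> Q y) -> near x P -> near x Q.
Proof. intros HPQ (d & Hd & H); exists d; split; auto. Qed.

Lemma near_and x P Q : near x P -> near x Q -> near x (fun y => P y /\ Q y).
Proof.
  intros (d1 & Hd1 & H1) (d2 & Hd2 & H2).
  exists (Rmin d1 d2); split; [apply Rmin_pos; assumption|].
  intros y Hy; split; [apply H1|apply H2]; intro i; specialize (Hy i);
    [pose proof (Rmin_l d1 d2)|pose proof (Rmin_r d1 d2)]; lra.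
Qed.

Lemma near_forall {D : Type} x (P : D -> X -> Prop) :
  finite D -> (forall d, near x (P d)) -> near x (fun y => forall d, P d y).
Proof.
  intros [l Hl] HP.
  apply (near_mono _ (fun y => forall d, In d l -> P d y)); [intros y Hy d; apply Hy, Hl|].
  clear Hl; induction l as [|a l IH].
  - exists 1; split; [lra|]. intros y _ d [].
  - apply (near_mono _ (fun y => P a y /\ forall d, In d l -> P d y));
      [|apply near_and; [apply HP|exact IH]].
    intros y [Ha Hl] d [<-|Hd]; auto.
Qed.

Definition cont_at (f : X -> R) (x : X) : Prop :=
  forall eps, 0 < eps -> near x (fun y => Rabs (f y - f x) < eps).

Lemma cont_at_const r x : cont_at (fun _ => r) x.
Proof. intros eps He; exists 1; split; [lra|]; intros; rewrite Rminus_diag, Rabs_R0; exact He. Qed.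

Lemma cont_at_coord i x : cont_at (c i) x.
Proof. intros eps He; exists eps; split; auto. Qed.

Lemma cont_at_plus f g x : cont_at f x -> cont_at g x -> cont_at (fun z => f z + g z) x.
Proof.
  intros Hf Hg eps He.
  apply (near_mono _ (fun y => Rabs (f y - f x) < eps/2 /\ Rabs (g y - g x) < eps/2));
    [|apply near_and; [apply Hf|apply Hg]; lra].
  intros y [H1 H2].
  replace (f y + g y - (f x + g x)) with ((f y - f x) + (g y - g x)) by ring.
  pose proof (Rabs_triang (f y - f x) (g y - g x)); lra.
Qed.

Lemma cont_at_mult f g x : cont_at f x -> cont_at g x -> cont_at (fun z => f z * g z) x.
Proof.
  intros Hf Hg eps He.
  set (K := 1 + Rabs (f x) + Rabs (g x)).
  assert (HK : 1 <= K) by (unfold K; pose proof (Rabs_pos (f x)); pose proof (Rabs_pos (g x)); lra).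
  set (e := Rmin 1 (eps / K)).
  assert (He0 : 0 < e) by (apply Rmin_pos; [lra|apply Rdiv_lt_0_compat; lra]).
  assert (HeK : e * K <= eps).
  { apply (Rle_trans _ (eps / K * K)); [apply Rmult_le_compat_r; [lra|apply Rmin_r]|].
    right; field; lra. }
  apply (near_mono _ (fun y => Rabs (f y - f x) < e /\ Rabs (g y - g x) < e));
    [|apply near_and; [apply Hf|apply Hg]; exact He0].
  intros y [Hu Hv].
  set (u := f y - f x) in *; set (v := g y - g x) in *.
  replace (f y * g y - f x * g x) with (u * v + f x * v + g x * u) by (unfold u, v; ring).
  assert (Htri : Rabs (u * v + f x * v + g x * u)
                 <= Rabs u * Rabs v + Rabs (f x) * Rabs v + Rabs (g x) * Rabs u).
  { rewrite <- !Rabs_mult.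
    pose proof (Rabs_triang (u * v + f x * v) (g x * u));
      pose proof (Rabs_triang (u * v) (f x * v)).
    lra. }
  assert (He1 : e <= 1) by apply Rmin_l.
  pose proof (Rabs_pos u); pose proof (Rabs_pos v);
    pose proof (Rabs_pos (f x)); pose proof (Rabs_pos (g x)).
  assert (Rabs u * Rabs v <= Rabs v) by nra.
  assert (Rabs (f x) * Rabs v <= Rabs (f x) * e) by nra.
  assert (Rabs (g x) * Rabs u <= Rabs (g x) * e) by nra.
  unfold K in HeK; nra.
Qed.

Lemma cont_at_inv f x : cont_at f x -> f x <> 0 -> cont_at (fun z => / f z) x.
Proof.
  intros Hf Hn eps He.
  set (A := Rabs (f x)). assert (HA : 0 < A) by (apply Rabs_pos_lt; assumption).
  set (e := Rmin (A / 2) (eps * A * A / 2)).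
  assert (He0 : 0 < e).
  { apply Rmin_pos; [lra|].
    apply Rdiv_lt_0_compat; [|lra]. repeat apply Rmult_lt_0_compat; assumption. }
  apply (near_mono _ (fun y => Rabs (f y - f x) < e)); [|apply Hf, He0].
  intros y H.
  assert (e <= A / 2) by apply Rmin_l.
  assert (e <= eps * A * A / 2) by apply Rmin_r.
  assert (HfyA : A / 2 < Rabs (f y)).
  { pose proof (Rabs_triang_inv (f x) (f x - f y)) as Htri.
    replace (f x - (f x - f y)) with (f y) in Htri by ring.
    rewrite Rabs_minus_sym in H. fold A in Htri. lra. }
  assert (Hfy : f y <> 0) by (intro E; rewrite E, Rabs_R0 in HfyA; lra).
  replace (/ f y - / f x) with ((f x - f y) / (f y * f x)) by (field; auto).
  unfold Rdiv. rewrite Rabs_mult, Rabs_inv, Rabs_mult. fold A. rewrite Rabs_minus_sym.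
  assert (0 < Rabs (f y) * A) by (apply Rmult_lt_0_compat; lra).
  apply (Rmult_lt_reg_r (Rabs (f y) * A)); [assumption|].
  rewrite Rmult_assoc, Rinv_l, Rmult_1_r by lra.
  assert (eps * (A / 2 * A) <= eps * (Rabs (f y) * A)).
  { apply Rmult_le_compat_l; [lra|]. apply Rmult_le_compat_r; lra. }
  lra.
Qed.

Lemma near_pos f x : cont_at f x -> 0 < f x -> near x (fun y => 0 < f y).
Proof.
  intros Hf Hp. apply (near_mono _ (fun y => Rabs (f y - f x) < f x)); [|apply Hf, Hp].
  intros y H; apply Rabs_def2 in H; lra.
Qed.

Lemma near_neq0 f x : cont_at f x -> f x <> 0 -> near x (fun y => f y <> 0).
Proof.
  intros Hf Hn. apply (near_mono _ (fun y => Rabs (f y - f x) < Rabs (f x)));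
    [|apply Hf, Rabs_pos_lt, Hn].
  intros y H E; rewrite E, Rminus_0_l, Rabs_Ropp in H; lra.
Qed.
End Near.

Definition cont_map {X Y C D : Type} (cX : C -> X -> R) (cY : D -> Y -> R) (F : X -> Y) (x : X) :=
  forall d, cont_at cX (fun z => cY d (F z)) x.

Section Maps.
Context {X Y C D : Type} (cX : C -> X -> R) (cY : D -> Y -> R) (F : X -> Y).
Hypothesis finite_D : finite D.

Lemma near_comp x (P : Y -> Prop) :
  cont_map cX cY F x -> near cY (F x) P -> near cX x (fun z => P (F z)).
Proof.
  intros HF (e & He & HP).
  apply (near_mono _ _ (fun z => forall d, Rabs (cY d (F z) - cY d (F x)) < e));
    [intros z Hz; apply HP, Hz|].
  apply near_forall; [exact finite_D|]. intro d; apply HF, He.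
Qed.

Lemma preimage_open (P : X -> Prop) (U : Y -> Prop) :
  coord_open cX P -> (forall x, P x -> cont_map cX cY F x) -> coord_open cY U ->
  coord_open cX (fun x => P x /\ U (F x)).
Proof.
  intros HP HF HU x [Px Ux].
  apply (near_and cX x P (fun z => U (F z))); [apply HP, Px|].
  apply near_comp; [apply HF, Px|apply HU, Ux].
Qed.

Lemma sub_continuous (S : X -> Prop) (T : Y -> Prop) (P : X -> Prop) (f : sig S -> sig T) :
  coord_open cX P -> (forall x, S x -> P x) -> (forall x, P x -> cont_map cX cY F x) ->
  (forall z, proj1_sig (f z) = F (proj1_sig z)) ->
  continuous (sub_open (coord_open cX) S) (sub_open (coord_open cY) T) f.
Proof.
  intros HP HSP HF Hf V (U & HU & HV).
  exists (fun x => P x /\ U (F x)); split; [apply preimage_open; assumption|].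
  intro z; rewrite HV, Hf; split; [|tauto]. intro; split; [apply HSP, proj2_sig|assumption].
Qed.
End Maps.

Definition R5_coord (i : I5) (y : R5) : R := y i.

Lemma finite_bool : finite bool.
Proof. exists [true; false]; intros []; simpl; tauto. Qed.

Lemma finite_I4 : finite I4.
Proof. exists [i1; i2; i3; i4]; intros []; simpl; tauto. Qed.

Lemma finite_I5 : finite I5.
Proof. exists [c1; c2; c3; c4; c5]; intros []; simpl; tauto. Qed.

Lemma finite_EF : finite EF.
Proof.
  exists ([exist _ (i1, i2, i3, i4) eq_refl; exist _ (i1, i3, i4, i2) eq_refl;
    exist _ (i1, i4, i2, i3) eq_refl; exist _ (i2, i1, i4, i3) eq_refl;
    exist _ (i2, i3, i1, i4) eq_refl; exist _ (i2, i4, i3, i1) eq_refl;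
    exist _ (i3, i1, i2, i4) eq_refl; exist _ (i3, i2, i4, i1) eq_refl;
    exist _ (i3, i4, i1, i2) eq_refl; exist _ (i4, i1, i3, i2) eq_refl;
    exist _ (i4, i2, i1, i3) eq_refl; exist _ (i4, i3, i2, i1) eq_refl] : list EF).
  intro s; EF_cases s; simpl; tauto.
Qed.

Lemma finite_config_index : finite (bool * I4 * I4).
Proof. repeat apply finite_prod; first [exact finite_bool | exact finite_I4]. Qed.

Lemma finite_dpair_index : finite (bool * EF).
Proof. apply finite_prod; [exact finite_bool|exact finite_EF]. Qed.

Lemma coord_open_true {X C : Type} (c : C -> X -> R) : coord_open c (fun _ => True).
Proof. intros x _; exists 1; split; [lra|auto]. Qed.

Lemma evl_cont z i j : cont_at config_coord (fun w => evl w i j) z.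
Proof.
  unfold evl, dot, sum4; repeat apply cont_at_plus; apply cont_at_mult;
    match goal with
    | |- cont_at _ (fun w => snd w ?m ?k) _ => exact (cont_at_coord config_coord (false, m, k) z)
    | |- cont_at _ (fun w => fst w ?m ?k) _ => exact (cont_at_coord config_coord (true, m, k) z)
    end.
Qed.

Lemma offdiag_evl_open : coord_open config_coord (fun z => offdiag_neq0 (evl z)).
Proof.
  intros z Hz.
  apply (near_mono _ _ (fun y => forall d : I4 * I4, fst d <> snd d -> evl y (fst d) (snd d) <> 0));
    [intros y Hy i j; apply (Hy (i, j))|].
  apply near_forall; [apply finite_prod; exact finite_I4|]. intros [i j]; simpl.
  destruct (I4_eq_dec i j) as [<-|Hij].
  - exists 1; split; [lra|]. intros y _ H; exact (False_ind _ (H eq_refl)).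
  - apply (near_mono _ _ (fun y => evl y i j <> 0)); [auto|].
    apply near_neq0; [apply evl_cont|apply Hz, Hij].
Qed.

Lemma ratios_cont z : offdiag_neq0 (evl z) -> cont_map config_coord dpair_coord ratios z.
Proof.
  intros Hz [[] s]; EF_cases s; simpl; unfold tri_ratio, edge_ratio; simpl; unfold Rdiv;
    (apply cont_at_mult; [repeat apply cont_at_mult; apply evl_cont|]);
    (apply cont_at_inv; [repeat apply cont_at_mult; apply evl_cont|]);
    repeat apply Rmult_integral_contrapositive_currified; apply Hz; discriminate.
Qed.

Lemma std_config_cont y : pos5 y -> cont_map R5_coord config_coord std_config y.
Proof.
  intros Hy [[[] m] k]; simpl; [apply cont_at_const|].
  pose proof (Hy c4); pose proof (Hy c5).
  destruct m, k; simpl; try apply cont_at_const;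
    repeat first [ apply cont_at_mult | apply cont_at_inv | exact (cont_at_coord R5_coord _ y)];
    repeat apply Rmult_integral_contrapositive_currified; lra.
Qed.

Lemma edge5_cont p : cont_map dpair_coord R5_coord edge5 p.
Proof.
  intros []; simpl;
    [ exact (cont_at_coord dpair_coord (false, s12) p)
    | exact (cont_at_coord dpair_coord (false, s13) p)
    | exact (cont_at_coord dpair_coord (false, s23) p)
    | exact (cont_at_coord dpair_coord (false, s14) p)
    | exact (cont_at_coord dpair_coord (false, s24) p) ].
Qed.

Lemma pos5_open : coord_open R5_coord pos5.
Proof.
  intros y Hy; apply (near_forall R5_coord y (fun i z => 0 < z i)); [exact finite_I5|].
  intro i; apply near_pos; [exact (cont_at_coord R5_coord i y)|apply Hy].
Qed.

Lemma sig_ext {A : Type} {P : A -> Prop} (a b : sig P) : proj1_sig a = proj1_sig b -> a = b.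
Proof. apply eq_sig_hprop; intros; apply proof_irrelevance. Qed.

Lemma continuous_comp {X Y Z : Type} oX oY oZ (f : X -> Y) (g : Y -> Z) :
  continuous oX oY f -> continuous oY oZ g -> continuous oX oZ (fun x => g (f x)).
Proof. intros Hf Hg V HV; exact (Hf _ (Hg V HV)). Qed.

Lemma homeomorphism_comp {X Y Z : Type} oX oY oZ (f : X -> Y) (g : Y -> Z) :
  homeomorphism oX oY f -> homeomorphism oY oZ g -> homeomorphism oX oZ (fun x => g (f x)).
Proof.
  intros (f' & Hf'f & Hff' & Hf & Hf') (g' & Hg'g & Hgg' & Hg & Hg').
  exists (fun z => f' (g' z)); split; [|split; [|split]].
  - intro x; rewrite Hg'g, Hf'f; reflexivity.
  - intro z; rewrite Hff', Hgg'; reflexivity.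
  - eapply continuous_comp; eassumption.
  - eapply continuous_comp; eassumption.
Qed.

Section Quotient.
Context {L : Type} (rel : L -> L -> Prop).

Lemma quot_ind (P : quot rel -> Prop) : (forall x, P (cls rel x)) -> forall C, P C.
Proof.
  intros HP C; destruct (proj2_sig C) as [x E].
  replace C with (cls rel x) by (apply sig_ext; symmetry; exact E).
  apply HP.
Qed.

Lemma cls_eq x y :
  (forall u v, rel u v -> rel v u) -> (forall u v w, rel u v -> rel v w -> rel u w) ->
  rel x y -> cls rel x = cls rel y.
Proof.
  intros Hsym Htrans Hxy. apply sig_ext; simpl.
  apply functional_extensionality; intro z; apply propositional_extensionality.
  split; intro H; eauto.
Qed.

Definition quot_lift {Y : Type} (f : L -> Y) (C : quot rel) : Y :=
  f (proj1_sig (constructive_indefinite_description _ (proj2_sig C))).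

Lemma quot_lift_cls {Y : Type} (f : L -> Y) x :
  (forall u, rel u u) -> (forall u v, rel u v -> f u = f v) -> quot_lift f (cls rel x) = f x.
Proof.
  intros Hrefl Hf. unfold quot_lift.
  destruct (constructive_indefinite_description _ _) as [y Hy]; simpl in *.
  apply Hf. rewrite <- Hy. apply Hrefl.
Qed.

Lemma continuous_cls oL : continuous oL (quot_open oL rel) (cls rel).
Proof. intros W HW; exact HW. Qed.

Lemma continuous_quot {Y : Type} oL oY (h : quot rel -> Y) (f : L -> Y) :
  (forall x, h (cls rel x) = f x) -> continuous oL oY f -> continuous (quot_open oL rel) oY h.
Proof.
  intros Hhf Hf V HV; unfold quot_open.
  replace (fun x => V (h (cls rel x))) with (fun x => V (f x))
    by (apply functional_extensionality; intro; rewrite Hhf; reflexivity).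
  exact (Hf V HV).
Qed.
End Quotient.

Lemma relL_refl u : relL u u.
Proof. apply flag_equiv_refl. Qed.

Lemma relL_sym u v : relL u v -> relL v u.
Proof. apply flag_equiv_sym. Qed.

Lemma relL_trans u v w : relL u v -> relL v w -> relL u w.
Proof. apply flag_equiv_trans. Qed.

Definition tet_ratios (x : Ltet) : DT :=
  exist _ (ratios (proj1_sig x)) (ratios_in_DT _ (proj2_sig x)).
Definition std_tet (y : P5) : Ltet :=
  exist _ (std_config (proj1_sig y)) (std_config_tetra _ (proj2_sig y)).
Definition edges (p : DT) : P5 :=
  exist _ (edge5 (proj1_sig p)) (DT_edge5_pos _ (proj2_sig p)).

Definition psi : FLT -> DT := quot_lift relL tet_ratios.
Definition psi_inv (p : DT) : FLT := cls relL (std_tet (edges p)).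

Lemma psi_cls x : psi (cls relL x) = tet_ratios x.
Proof.
  apply quot_lift_cls; [exact relL_refl|].
  intros u v Huv; apply sig_ext, ratios_flag_equiv; [apply proj2_sig|exact Huv].
Qed.

Lemma tet_ratios_std_tet p : tet_ratios (std_tet (edges p)) = p.
Proof. apply sig_ext, std_config_ratios, proj2_sig. Qed.

Lemma edges_tet_ratios y : edges (tet_ratios (std_tet y)) = y.
Proof. apply sig_ext, edge5_std_config, proj2_sig. Qed.

Lemma tet_ratios_continuous : continuous Ltet_open DT_open tet_ratios.
Proof.
  apply (sub_continuous config_coord dpair_coord ratios finite_dpair_index _ _
    (fun z => offdiag_neq0 (evl z))).
  - exact offdiag_evl_open.
  - exact tetra_offdiag_neq0.
  - exact ratios_cont.
  - reflexivity.
Qed.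

Lemma std_tet_continuous : continuous P5_open Ltet_open std_tet.
Proof.
  apply (sub_continuous R5_coord config_coord std_config finite_config_index _ _ pos5).
  - exact pos5_open.
  - auto.
  - exact std_config_cont.
  - reflexivity.
Qed.

Lemma edges_continuous : continuous DT_open P5_open edges.
Proof.
  apply (sub_continuous dpair_coord R5_coord edge5 finite_I5 _ _ (fun _ => True)).
  - apply coord_open_true.
  - auto.
  - intros p _; apply edge5_cont.
  - reflexivity.
Qed.

Lemma homeomorphism_edges : homeomorphism DT_open P5_open edges.
Proof.
  exists (fun y => tet_ratios (std_tet y)); split; [|split; [|split]].
  - exact tet_ratios_std_tet.
  - exact edges_tet_ratios.
  - exact edges_continuous.
  - exact (continuous_comp _ _ _ _ _ std_tet_continuous tet_ratios_continuous).
Qed.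

Lemma homeomorphism_psi : homeomorphism FLT_open DT_open psi.
Proof.
  exists psi_inv; split; [|split; [|split]].
  - apply quot_ind; intro x. rewrite psi_cls. apply cls_eq; [exact relL_sym|exact relL_trans|].
    apply relL_sym, tetra_flag_equiv_std, proj2_sig.
  - intro p; unfold psi_inv; rewrite psi_cls; apply tet_ratios_std_tet.
  - exact (continuous_quot _ _ _ _ _ psi_cls tet_ratios_continuous).
  - exact (continuous_comp _ _ _ _ (fun y => cls relL (std_tet y)) edges_continuous
      (continuous_comp _ _ _ _ _ std_tet_continuous (continuous_cls _ _))).
Qed.

Theorem theorem2p6 :
  (exists h : FLT -> DT,
      (forall x : Ltet, proj1_sig (h (cls relL x)) = ratios (proj1_sig x)) /\
      homeomorphism FLT_open DT_open h) /\
  (exists h : DT -> P5,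
      (forall p : DT, proj1_sig (h p) = edge5 (proj1_sig p)) /\
      homeomorphism DT_open P5_open h) /\
  (exists h : FLT -> P5, homeomorphism FLT_open P5_open h).
Proof.
  split; [|split].
  - exists psi; split; [intro x; rewrite psi_cls; reflexivity|exact homeomorphism_psi].
  - exists edges; split; [reflexivity|exact homeomorphism_edges].
  - exists (fun C => edges (psi C)).
    exact (homeomorphism_comp _ _ _ _ _ homeomorphism_psi homeomorphism_edges).
Qed.
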